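(* Let $p$ be a nonzero integer and let $d$ be an integer with $d \neq 0$, $d \neq -1$, such that $d$ and $d+1$ are both divisors of $2p$, and such that $2p\left(d + \frac{1}{d}\right)$, $2p\left(d + \frac{1}{d+1}\right)$ and $2p\left(\frac{1}{d} + \frac{d}{d+1}\right)$ are integers. Then $$\left\{-p - 2p\left(d + \frac{1}{d}\right)\right\}^3 + \left\{p + 2p\left(d + \frac{1}{d+1}\right)\right\}^3 + \left\{p + 2p\left(\frac{1}{d} + \frac{d}{d+1}\right)\right\}^3 = 3p^3,$$ so that $3p^3$ is represented as a sum of three integer cubes. *)

From mathcomp Require Import all_boot all_order all_algebra.

From mathcomp Require Import all_boot all_order all_algebra.
From mathcomp Require Import ring.
Import Order.TTheory GRing.Theory Num.Theory.
Local Open Scope ring_scope.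

(* The divisibility and integrality
   hypotheses only serve to make the three cubes integers. *)

Lemma three_cubes_identity (F : fieldType) (x y : F) :
  x != 0 -> x + 1 != 0 ->
  (- y - 2 * y * (x + x^-1)) ^+ 3
  + (y + 2 * y * (x + (x + 1)^-1)) ^+ 3
  + (y + 2 * y * (x^-1 + x / (x + 1))) ^+ 3
  = 3 * y ^+ 3.
Proof. by move=> x_neq0 x1_neq0; field; rewrite x_neq0 x1_neq0. Qed.

Lemma intr_addr1_eq0 (R : numDomainType) (d : int) :
  ((d%:~R : R) + 1 == 0) = (d == -1).
Proof. by rewrite -[1]/(1%:~R) -intrD intr_eq0 addr_eq0. Qed.

Theorem lemma3p2 (p d : int) :
  p != 0 -> d != 0 -> d != -1 ->
  (d %| 2 * p)%Z -> (d + 1 %| 2 * p)%Z ->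
  (2 * p%:~R * (d%:~R + (d%:~R)^-1) : rat) \is a Num.int ->
  (2 * p%:~R * (d%:~R + (d%:~R + 1)^-1) : rat) \is a Num.int ->
  (2 * p%:~R * ((d%:~R)^-1 + d%:~R / (d%:~R + 1)) : rat) \is a Num.int ->
  (- p%:~R - 2 * p%:~R * (d%:~R + (d%:~R)^-1)) ^+ 3
  + (p%:~R + 2 * p%:~R * (d%:~R + (d%:~R + 1)^-1)) ^+ 3
  + (p%:~R + 2 * p%:~R * ((d%:~R)^-1 + d%:~R / (d%:~R + 1))) ^+ 3
  = 3 * (p%:~R : rat) ^+ 3.
Proof.
move=> _ d_neq0 d_neqN1 _ _ _ _ _.
by apply: three_cubes_identity; rewrite ?intr_eq0 ?intr_addr1_eq0.
Qed.
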